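(* Let $T$ be a tree with root $r$, edges directed towards $r$, edge set $E$, and let $B,R$ be disjoint sets of leaves of $T$. Then there are sets $X,Y\subseteq E$ such that $\bar r(X)=Y$ and $\bar b(Y)=X$.
   Context: Edges are ordered pairs $st$ pointing from $s$ to $t$, directed towards $r$; a leaf is a vertex with no incoming edges. $A(v,X)$ is the number of edges of $X$ pointing to $v$ minus the number of edges of $X$ pointing away from $v$, and $A(v,X,Y)=A(v,X)-A(v,Y)$. The \emph{blue overflow} $\bar b(X)$ of $X\subseteq E$ is defined by transfinite recursion: $Y_0$ is the set of all edges in $E\setminus X$ whose starting vertex is in $B$; at a successor $\alpha=\beta+1$, if every $st\in E\setminus(X\cup Y_\beta)$ satisfies $A(s,Y_\beta,X)\le 0$, stop and set $\bar b(X)=Y_\beta$; otherwise pick some $st\in E\setminus (X\cup Y_\beta)$ with $A(s,Y_\beta,X)\ge 1$ and let $Y_\alpha=Y_\beta\cup\{st\}$; at limits $Y_\alpha=\bigcup_{\beta<\alpha}Y_\beta$. (The result does not depend on the choices made.) The \emph{red overflow} $\bar r(X)$ is defined identically with $R$ in place of $B$. *)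

(* Edges are ordered pairs (s,t) pointing from s to t. *)
From Stdlib Require Import List ZArith Relations.
Import ListNotations.
Open Scope Z_scope.

Section Defs.
Variable V : Type.

Definition edge := (V * V)%type.
Definition eset := edge -> Prop.

Definition rooted_tree (E : V -> V -> Prop) (r : V) : Prop :=
  (forall w, ~ E r w) /\
  (forall v, v <> r -> exists w, E v w /\ forall w', E v w' -> w' = w) /\
  (forall v, clos_refl_trans V E v r).

(* every vertex has finitely many incoming edges (needed for A to be an integer) *)
Definition locally_finite (E : V -> V -> Prop) : Prop :=
  forall v, exists l : list V, forall u, E u v -> In u l.

Definition leaf (E : V -> V -> Prop) (v : V) : Prop := forall u, ~ E u v.

Definition card_eq (P : V -> Prop) (n : nat) : Prop :=
  exists l : list V, NoDup l /\ length l = n /\ forall x, P x <-> In x l.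

Definition A_val (E : V -> V -> Prop) (X : eset) (v : V) (z : Z) : Prop :=
  exists i o : nat,
    card_eq (fun u => E u v /\ X (u, v)) i /\
    card_eq (fun w => E v w /\ X (v, w)) o /\
    z = Z.of_nat i - Z.of_nat o.

Definition A2_ge1 (E : V -> V -> Prop) (v : V) (X Y : eset) : Prop :=
  exists a b, A_val E X v a /\ A_val E Y v b /\ a - b >= 1.

Definition A2_le0 (E : V -> V -> Prop) (v : V) (X Y : eset) : Prop :=
  forall a b, A_val E X v a -> A_val E Y v b -> a - b <= 0.

Definition eset_eq (X Y : eset) : Prop := forall e, X e <-> Y e.

Definition overflow_start (E : V -> V -> Prop) (C : V -> Prop) (X : eset) : eset :=
  fun e => E (fst e) (snd e) /\ ~ X e /\ C (fst e).

(* Y is the outcome of SOME run of the transfinite recursion defining the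
   C-overflow of X.  A run is encoded by the set D of edges added at
   successor steps, well-ordered by the time lt at which they are added:
   the edge e = st added at step beta+1 satisfies st notin X u Y_beta and
   A(s, Y_beta, X) >= 1, where Y_beta = Y_0 u {f in D | f lt e}; at the
   stopping stage every st in E \ (X u Y) has A(s, Y, X) <= 0. *)
Definition overflow_outcome (E : V -> V -> Prop) (C : V -> Prop) (X Y : eset) : Prop :=
  exists (D : eset) (lt : edge -> edge -> Prop),
    let Y0 := overflow_start E C X in
    (forall e, Y e <-> Y0 e \/ D e) /\
    (forall e, D e -> E (fst e) (snd e) /\ ~ X e /\ ~ Y0 e) /\
    (forall e, D e -> ~ lt e e) /\
    (forall e f g, D e -> D f -> D g -> lt e f -> lt f g -> lt e g) /\
    (forall e f, D e -> D f -> e = f \/ lt e f \/ lt f e) /\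
    (forall P : eset, (forall e, P e -> D e) -> (exists e, P e) ->
        exists m, P m /\ forall e, P e -> ~ lt e m) /\
    (forall e, D e ->
        A2_ge1 E (fst e) (fun f => Y0 f \/ (D f /\ lt f e)) X) /\
    (forall s t, E s t -> ~ X (s, t) -> ~ Y (s, t) -> A2_le0 E s Y X).

(* overflow E C X = Y : Y is the (choice-independent) result of the recursion:
   some run produces Y, and every run produces Y. *)
Definition overflow_is (E : V -> V -> Prop) (C : V -> Prop) (X Y : eset) : Prop :=
  overflow_outcome E C X Y /\ forall Z, overflow_outcome E C X Z -> eset_eq Z Y.

End Defs.

Arguments rooted_tree {V}.
Arguments locally_finite {V}.
Arguments leaf {V}.
Arguments overflow_is {V}.

From Stdlib Require Import List ZArith Relations Lia Classical ClassicalEpsilon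
  FunctionalExtensionality PropExtensionality Cantor Wf_nat Lexicographic_Product
  Inverse_Image.
Import ListNotations.
Open Scope nat_scope.

(* Since the unique edge leaving s is st, A(s,Z,X) for st outside Z and X
   only compares the numbers of Z- and X-edges entering s.  Hence the
   C-overflow of X is the least set of edges containing the start edges and
   containing every st outside X into which strictly more of its own edges
   than of X's enter s.  By local finiteness this least set is reached after
   omega rounds, and ordering its edges by round (and, within a round, by a
   countable coding of the tree) is a run of the recursion; conversely every
   run stays inside it and, by its stopping condition, is closed.  Being a
   least closed set, the overflow is antitone in X, so X |-> b(r(X)) is
   monotone and Knaster-Tarski yields X = b(r(X)); take Y = r(X). *)

Lemma well_founded_minimal (A : Type) (R : A -> A -> Prop) :
  well_founded R ->
  forall P : A -> Prop, (exists x, P x) -> exists m, P m /\ forall x, P x -> ~ R x m.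
Proof.
  intros wf P [x hx]. apply NNPP. intros hno.
  assert (hnone : forall y, ~ P y).
  { intros y. induction y as [y IH] using (well_founded_ind wf). intros hy.
    apply hno. exists y. split; [exact hy|]. intros z hz hzy. exact (IH z hzy hz). }
  exact (hnone x hx).
Qed.

Lemma knaster_tarski (A : Type) (Phi : (A -> Prop) -> A -> Prop) :
  (forall X1 X2 : A -> Prop, (forall a, X1 a -> X2 a) -> forall a, Phi X1 a -> Phi X2 a) ->
  exists X, Phi X = X.
Proof.
  intros mono.
  set (lfp := fun a => forall X, (forall b, Phi X b -> X b) -> X a).
  assert (pre : forall a, Phi lfp a -> lfp a).
  { intros a ha X hX. apply hX. eapply mono; [|exact ha]. intros b hb. exact (hb X hX). }
  assert (post : forall a, lfp a -> Phi lfp a).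
  { intros a ha. apply ha. intros b hb. eapply mono; [exact pre|exact hb]. }
  exists lfp. apply functional_extensionality. intros a.
  apply propositional_extensionality. split; [apply pre|apply post].
Qed.

Definition lex_lt : nat * nat -> nat * nat -> Prop := slexprod nat nat lt lt.

Lemma lex_lt_irrefl p : ~ lex_lt p p.
Proof. intros h. inversion h; lia. Qed.

Lemma lex_lt_trans p q s : lex_lt p q -> lex_lt q s -> lex_lt p s.
Proof.
  intros h1 h2. inversion h1; subst; inversion h2; subst;
    solve [apply left_slex; lia | apply right_slex; lia].
Qed.

Lemma lex_lt_total p q : p = q \/ lex_lt p q \/ lex_lt q p.
Proof.
  destruct p as [a b], q as [c d].
  destruct (Nat.lt_trichotomy a c) as [hac|[<-|hca]];
    [right; left; apply left_slex; exact hac| |right; right; apply left_slex; exact hca].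
  destruct (Nat.lt_trichotomy b d) as [hbd|[<-|hdb]]; [| left; reflexivity |].
  - right; left. apply right_slex. exact hbd.
  - right; right. apply right_slex. exact hdb.
Qed.

Lemma lex_lt_wf : well_founded lex_lt.
Proof. exact (wf_slexprod _ _ _ _ lt_wf lt_wf). Qed.

Section Tree.
Variable V : Type.
Variable E : V -> V -> Prop.
Variable r : V.
Hypothesis Htree : rooted_tree E r.
Hypothesis Hfin : locally_finite E.

Definition holds (P : Prop) : bool := if excluded_middle_informative P then true else false.

Lemma holds_true P : holds P = true <-> P.
Proof.
  unfold holds. destruct (excluded_middle_informative P); split; auto; discriminate.
Qed.

Definition children (v : V) : list V :=
  nodup (fun x y => excluded_middle_informative (x = y))
    (filter (fun u => holds (E u v))
       (proj1_sig (constructive_indefinite_description _ (Hfin v)))).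

Lemma children_spec v : NoDup (children v) /\ forall u, In u (children v) <-> E u v.
Proof.
  unfold children. destruct (constructive_indefinite_description _ (Hfin v)) as [l hl].
  simpl. split; [apply NoDup_nodup|]. intros u.
  rewrite nodup_In, filter_In, holds_true. split; [tauto|auto].
Qed.

Lemma out_edge_unique s t w : E s t -> E s w -> w = t.
Proof.
  destruct Htree as [root_sink [out_unique _]]. intros est esw.
  assert (s <> r) by (intros ->; exact (root_sink t est)).
  destruct (out_unique s H) as [x [_ hx]]. rewrite (hx t est), (hx w esw). reflexivity.
Qed.

Definition in_count (Z : eset V) (s : V) : nat :=
  length (filter (fun u => holds (Z (u, s))) (children s)).

Lemma in_count_mono (Z1 Z2 : eset V) s :
  (forall u, E u s -> Z1 (u, s) -> Z2 (u, s)) -> in_count Z1 s <= in_count Z2 s.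
Proof.
  intros h. destruct (children_spec s) as [nd hch]. apply NoDup_incl_length.
  - apply NoDup_filter, nd.
  - intros u. rewrite !filter_In, !holds_true. intros [hu hz].
    split; [exact hu|]. apply h; [apply hch|]; assumption.
Qed.

Lemma card_eq_unique (P : V -> Prop) n m : card_eq V P n -> card_eq V P m -> n = m.
Proof.
  intros [l [nd [<- hl]]] [l' [nd' [<- hl']]].
  apply Nat.le_antisymm; apply NoDup_incl_length; auto;
    intros x hx; [apply hl', hl | apply hl, hl']; exact hx.
Qed.

Lemma card_eq_in_count (Z : eset V) s :
  card_eq V (fun u => E u s /\ Z (u, s)) (in_count Z s).
Proof.
  destruct (children_spec s) as [nd hch].
  exists (filter (fun u => holds (Z (u, s))) (children s)).
  split; [apply NoDup_filter, nd|split; [reflexivity|]].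
  intros u. rewrite filter_In, holds_true, hch. tauto.
Qed.

Lemma card_eq_out_absent (Z : eset V) s t :
  E s t -> ~ Z (s, t) -> card_eq V (fun w => E s w /\ Z (s, w)) 0.
Proof.
  intros est nz. exists []. split; [constructor|split; [reflexivity|]].
  intros w. split; [|intros []]. intros [esw zw].
  rewrite (out_edge_unique s t w est esw) in zw. contradiction.
Qed.

Lemma A_val_absent (Z : eset V) s t a : E s t -> ~ Z (s, t) ->
  A_val V E Z s a <-> a = Z.of_nat (in_count Z s).
Proof.
  intros est nz. split.
  - intros [i [o [hi [ho ->]]]].
    rewrite (card_eq_unique _ _ _ hi (card_eq_in_count Z s)).
    rewrite (card_eq_unique _ _ _ ho (card_eq_out_absent Z s t est nz)). lia.
  - intros ->. exists (in_count Z s), 0.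
    split; [apply card_eq_in_count|split; [exact (card_eq_out_absent Z s t est nz)|lia]].
Qed.

Lemma A2_ge1_iff (Y X : eset V) s t : E s t -> ~ Y (s, t) -> ~ X (s, t) ->
  A2_ge1 V E s Y X <-> in_count X s < in_count Y s.
Proof.
  intros est ny nx. split.
  - intros [a [b [ha [hb hab]]]].
    rewrite (A_val_absent Y s t a est ny) in ha. rewrite (A_val_absent X s t b est nx) in hb.
    lia.
  - intros h. exists (Z.of_nat (in_count Y s)), (Z.of_nat (in_count X s)).
    rewrite (A_val_absent Y s t _ est ny), (A_val_absent X s t _ est nx). lia.
Qed.

Lemma A2_le0_iff (Y X : eset V) s t : E s t -> ~ Y (s, t) -> ~ X (s, t) ->
  A2_le0 V E s Y X <-> in_count Y s <= in_count X s.
Proof.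
  intros est ny nx. split.
  - intros h. specialize (h (Z.of_nat (in_count Y s)) (Z.of_nat (in_count X s))).
    rewrite (A_val_absent Y s t _ est ny), (A_val_absent X s t _ est nx) in h. lia.
  - intros h a b ha hb.
    rewrite (A_val_absent Y s t a est ny) in ha. rewrite (A_val_absent X s t b est nx) in hb.
    lia.
Qed.

(* A vertex is coded by the child indices along its path to [r], packed by Cantor pairing. *)
Inductive address : V -> nat -> Prop :=
| address_root : address r 0
| address_child v w i k : E v w -> nth_error (children w) i = Some v -> address w k ->
    address v (S (Cantor.to_nat (i, k))).

Lemma address_exists v : exists k, address v k.
Proof.
  destruct Htree as [_ [_ reach]].
  assert (walk : forall x y, clos_refl_trans_1n V E x y -> y = r -> exists k, address x k).
  { intros x y h. induction h as [|x w y exw _ IH]; intros ->.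
    - exists 0. constructor.
    - destruct (IH eq_refl) as [k hk].
      destruct (In_nth_error (children w) x) as [i hi]; [apply children_spec, exw|].
      exists (S (Cantor.to_nat (i, k))). econstructor; eauto. }
  exact (walk v r (clos_rt_rt1n _ _ _ _ (reach v)) eq_refl).
Qed.

Lemma address_injective v v' k : address v k -> address v' k -> v = v'.
Proof.
  intros h. revert v'.
  induction h as [|v w i k evw hi hw IH]; intros v' h'.
  - inversion h'. reflexivity.
  - remember (S (Cantor.to_nat (i, k))) as n eqn:hn.
    destruct h' as [|v' w' i' k' evw' hi' hw']; [discriminate|].
    apply (f_equal pred) in hn. cbn [pred] in hn.
    apply (f_equal Cantor.of_nat) in hn. rewrite !Cantor.cancel_of_to in hn.
    injection hn as -> ->. rewrite (IH w' hw') in hi. congruence.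
Qed.

Lemma vertex_countable : exists key : V -> nat, forall v v', key v = key v' -> v = v'.
Proof.
  exists (fun v => epsilon (inhabits 0) (address v)). intros v v' hkey.
  apply (address_injective v v' (epsilon (inhabits 0) (address v))).
  - exact (epsilon_spec _ _ (address_exists v)).
  - rewrite hkey. exact (epsilon_spec _ _ (address_exists v')).
Qed.

Fixpoint stage (C : V -> Prop) (X : eset V) (n : nat) : eset V :=
  match n with
  | 0 => overflow_start V E C X
  | S n => fun e => stage C X n e \/
      (E (fst e) (snd e) /\ ~ X e /\ in_count X (fst e) < in_count (stage C X n) (fst e))
  end.

Definition overflow (C : V -> Prop) (X : eset V) : eset V := fun e => exists n, stage C X n e.

Definition overflow_closed (C : V -> Prop) (X Z : eset V) : Prop :=
  (forall e, overflow_start V E C X e -> Z e) /\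
  forall s t, E s t -> ~ X (s, t) -> in_count X s < in_count Z s -> Z (s, t).

Lemma stage_mono C X m n e : m <= n -> stage C X m e -> stage C X n e.
Proof. induction 1; simpl; auto. Qed.

Lemma stage_edge C X n e : stage C X n e -> E (fst e) (snd e) /\ ~ X e.
Proof.
  induction n as [|n IH]; simpl.
  - unfold overflow_start. tauto.
  - intros [h|h]; [exact (IH h)|tauto].
Qed.

Lemma overflow_edge C X e : overflow C X e -> E (fst e) (snd e) /\ ~ X e.
Proof. intros [n h]. exact (stage_edge C X n e h). Qed.

Lemma overflow_least C X Z e : overflow_closed C X Z -> overflow C X e -> Z e.
Proof.
  intros [hstart hstep] [n hn]. revert e hn.
  induction n as [|n IH]; simpl; intros e hn; [exact (hstart e hn)|].
  destruct hn as [hn|[he [hx hlt]]]; [exact (IH e hn)|].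
  destruct e as [s t]. apply hstep; auto.
  eapply Nat.lt_le_trans; [exact hlt|]. apply in_count_mono. intros u _. apply IH.
Qed.

(* Only finitely many edges enter [s]. *)
Lemma overflow_in_stage C X s :
  exists n, forall u, E u s -> overflow C X (u, s) -> stage C X n (u, s).
Proof.
  assert (hlist : forall l : list V,
    exists n, forall u, In u l -> overflow C X (u, s) -> stage C X n (u, s)).
  { induction l as [|a l [n IH]]; [exists 0; intros u []|].
    destruct (classic (overflow C X (a, s))) as [[m hm]|na].
    - exists (max n m). intros u [<-|hu] hov.
      + exact (stage_mono C X m _ _ (Nat.le_max_r n m) hm).
      + exact (stage_mono C X n _ _ (Nat.le_max_l n m) (IH u hu hov)).
    - exists n. intros u [<-|hu] hov; [contradiction|exact (IH u hu hov)]. }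
  destruct (hlist (children s)) as [n hn]. exists n. intros u hu.
  apply hn, children_spec, hu.
Qed.

Lemma overflow_closed_overflow C X : overflow_closed C X (overflow C X).
Proof.
  split; [intros e h; exists 0; exact h|].
  intros s t est nx hlt. destruct (overflow_in_stage C X s) as [n hn].
  exists (S n). simpl. right. split; [exact est|split; [exact nx|]].
  eapply Nat.lt_le_trans; [exact hlt|]. apply in_count_mono. exact hn.
Qed.

Lemma overflow_closed_antitone C (X1 X2 Z : eset V) :
  (forall e, X1 e -> X2 e) -> overflow_closed C X1 Z -> overflow_closed C X2 Z.
Proof.
  intros hX [hstart hstep]. split.
  - intros e [he [hx hc]]. apply hstart. split; [exact he|split; auto].
  - intros s t est nx hlt. apply hstep; auto.
    eapply Nat.le_lt_trans; [|exact hlt]. apply in_count_mono. auto.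
Qed.

Lemma overflow_antitone C (X1 X2 : eset V) :
  (forall e, X1 e -> X2 e) -> forall e, overflow C X2 e -> overflow C X1 e.
Proof.
  intros hX e. apply overflow_least.
  exact (overflow_closed_antitone C X1 X2 _ hX (overflow_closed_overflow C X1)).
Qed.

Definition first_stage C X (e : edge V) : nat :=
  epsilon (inhabits 0) (fun n => stage C X n e /\ forall m, stage C X m e -> n <= m).

Lemma first_stage_spec C X e : overflow C X e ->
  stage C X (first_stage C X e) e /\ forall m, stage C X m e -> first_stage C X e <= m.
Proof.
  intros hov. unfold first_stage. apply epsilon_spec.
  destruct (well_founded_minimal nat lt lt_wf (fun n => stage C X n e) hov) as [n [hn hmin]].
  exists n. split; [exact hn|]. intros m hm. apply Nat.nlt_ge. exact (hmin m hm).
Qed.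

Section Run.
Variables (C : V -> Prop) (X : eset V) (key : V -> nat).
Hypothesis key_inj : forall v v', key v = key v' -> v = v'.

Let added (e : edge V) : Prop := overflow C X e /\ ~ overflow_start V E C X e.

Let before (e f : edge V) : Prop :=
  lex_lt (first_stage C X e, key (fst e)) (first_stage C X f, key (fst f)).

Lemma before_total e f : added e -> added f -> e = f \/ before e f \/ before f e.
Proof.
  intros [he _] [hf _].
  destruct (lex_lt_total (first_stage C X e, key (fst e)) (first_stage C X f, key (fst f)))
    as [heq|hlt]; [left|right; exact hlt].
  injection heq as _ hkey. apply key_inj in hkey.
  destruct e as [s t], f as [s' t']. simpl in *. subst s'.
  rewrite (out_edge_unique s t t' (proj1 (overflow_edge C X _ he))
                                  (proj1 (overflow_edge C X _ hf))).
  reflexivity.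
Qed.

Lemma before_minimal (P : eset V) :
  (exists e, P e) -> exists m, P m /\ forall e, P e -> ~ before e m.
Proof.
  apply well_founded_minimal.
  exact (wf_inverse_image _ _ lex_lt (fun e => (first_stage C X e, key (fst e))) lex_lt_wf).
Qed.

Lemma added_step e :
  added e -> A2_ge1 V E (fst e) (fun f => overflow_start V E C X f \/ (added f /\ before f e)) X.
Proof.
  intros [hov hnot0]. destruct (first_stage_spec C X e hov) as [hn hmin].
  destruct (first_stage C X e) as [|p] eqn:hp; [contradiction|].
  destruct hn as [hprev|[est [nx hlt]]]; [specialize (hmin p hprev); lia|].
  destruct e as [s t]. simpl in *.
  apply (A2_ge1_iff _ X s t est); [|exact nx|].
  - intros [h|[_ h]]; [contradiction|exact (lex_lt_irrefl _ h)].
  - eapply Nat.lt_le_trans; [exact hlt|]. apply in_count_mono. intros u _ hu.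
    destruct (classic (overflow_start V E C X (u, s))) as [h0|h0]; [left; exact h0|right].
    assert (hovu : overflow C X (u, s)) by (exists p; exact hu).
    split; [split; assumption|]. unfold before. rewrite hp. apply left_slex.
    pose proof (proj2 (first_stage_spec C X _ hovu) p hu). lia.
Qed.

Lemma run_outcome : overflow_outcome V E C X (overflow C X).
Proof.
  exists added, before. cbv zeta.
  split; [|split; [|split; [|split; [|split; [|split; [|split]]]]]].
  - intros e. split; [|intros [h|[h _]]; [exists 0; exact h|exact h]].
    intros h. destruct (classic (overflow_start V E C X e)); [left|right; split]; assumption.
  - intros e [h h0]. destruct (overflow_edge C X e h). auto.
  - intros e _. apply lex_lt_irrefl.
  - intros e f g _ _ _. apply lex_lt_trans.
  - exact before_total.
  - intros P _. apply before_minimal.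
  - exact added_step.
  - intros s t est nx nov. apply (A2_le0_iff _ X s t est nov nx).
    apply Nat.nlt_ge. intros hlt. exact (nov (proj2 (overflow_closed_overflow C X) s t est nx hlt)).
Qed.

End Run.

Lemma outcome_within_overflow C X Z :
  overflow_outcome V E C X Z -> forall e, Z e -> overflow C X e.
Proof.
  intros [D [lt [hZ [hD [hirr [_ [_ [hmin [hstep _]]]]]]]]]. cbv zeta in *.
  assert (hDov : forall e, D e -> overflow C X e).
  { apply NNPP. intros hno. apply not_all_ex_not in hno. destruct hno as [e0 he0].
    destruct (hmin (fun e => D e /\ ~ overflow C X e)) as [[s t] [[hm hmov] hfirst]];
      [intros e [h _]; exact h|exists e0; apply imply_to_and, he0|].
    destruct (hD _ hm) as [est [nx n0]]. simpl in est.
    pose proof (hstep _ hm) as hs. simpl in hs.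
    apply (A2_ge1_iff _ X s t est) in hs;
      [|intros [h|[_ h]]; [exact (n0 h)|exact (hirr _ hm h)]|exact nx].
    apply hmov, (proj2 (overflow_closed_overflow C X) s t est nx).
    eapply Nat.lt_le_trans; [exact hs|]. apply in_count_mono.
    intros u _ [h|[hd hlt]]; [exists 0; exact h|].
    apply NNPP. intros hnu. exact (hfirst (u, s) (conj hd hnu) hlt). }
  intros e he. apply hZ in he. destruct he as [h|h]; [exists 0; exact h|exact (hDov e h)].
Qed.

Lemma outcome_closed C X Z : overflow_outcome V E C X Z -> overflow_closed C X Z.
Proof.
  intros [D [lt [hZ [_ [_ [_ [_ [_ [_ hstop]]]]]]]]]. cbv zeta in *. split.
  - intros e h. apply hZ. left. exact h.
  - intros s t est nx hlt. apply NNPP. intros nz.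
    pose proof (proj1 (A2_le0_iff Z X s t est nz nx) (hstop s t est nx nz)). lia.
Qed.

Lemma overflow_is_overflow C X : overflow_is E C X (overflow C X).
Proof.
  split.
  - destruct vertex_countable as [key key_inj]. exact (run_outcome C X key key_inj).
  - intros Z hZ e. split.
    + apply (outcome_within_overflow C X Z hZ).
    + apply overflow_least, outcome_closed, hZ.
Qed.

End Tree.

Theorem lemma2p6 (V : Type) (E : V -> V -> Prop) (r : V)
  (B R : V -> Prop)
  (Htree : rooted_tree E r)
  (Hfin : locally_finite E)
  (HB : forall v, B v -> leaf E v)
  (HR : forall v, R v -> leaf E v)
  (HBR : forall v, ~ (B v /\ R v)) :
  exists X Y : eset V,
    (forall e, X e -> E (fst e) (snd e)) /\
    (forall e, Y e -> E (fst e) (snd e)) /\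
    overflow_is E R X Y /\ overflow_is E B Y X.
Proof.
  destruct (knaster_tarski (edge V) (fun X => overflow V E Hfin B (overflow V E Hfin R X)))
    as [X hfix].
  { intros X1 X2 hX. apply overflow_antitone, overflow_antitone, hX. }
  exists X, (overflow V E Hfin R X).
  split; [|split; [|split]].
  - intros e he. rewrite <- hfix in he. exact (proj1 (overflow_edge V E Hfin _ _ e he)).
  - intros e he. exact (proj1 (overflow_edge V E Hfin _ _ e he)).
  - exact (overflow_is_overflow V E r Htree Hfin R X).
  - pose proof (overflow_is_overflow V E r Htree Hfin B (overflow V E Hfin R X)) as h.
    rewrite hfix in h. exact h.
Qed.
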